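(* Let $m$ be an even positive integer. Then $|M_1^m|=|M_2^m|$.
   Context: With integers $x,z>0$, $y$: $M_1^m=\{\begin{bmatrix}x&y\\0&z\end{bmatrix}: xz=m,\ 0\leq y<z,\ \gcd(x,y,z)=1,\ x\text{ odd}\}$, $S_1^m=\{\begin{bmatrix}x&y\\0&z\end{bmatrix}: xz=m,\ 0\leq y<z,\ \gcd(x,y,z)=1,\ z\text{ odd}\}$, $S_2^m=\{2^{-1/2}\begin{bmatrix}x&y\\0&z\end{bmatrix}: xz=2m,\ 0\leq y<z,\ \gcd(x,y,z)=1,\ x,z\text{ even}\}$, $M_2^m=S_1^m\cup S_2^m$. *)

From HB Require Import structures.
From mathcomp Require Import all_boot all_order all_algebra all_field.
From mathcomp Require Import finmap.
Set Implicit Arguments. Unset Strict Implicit. Unset Printing Implicit Defensive.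
Import Order.TTheory GRing.Theory Num.Theory.
Local Open Scope ring_scope.
Local Open Scope fset_scope.

Definition utmx (x y z : nat) : 'M[algC]_2 :=
  \matrix_(i < 2, j < 2)
    (if (i : nat) == 0%N then (if (j : nat) == 0%N then x%:R else y%:R)
     else (if (j : nat) == 0%N then 0 else z%:R)).

Definition triples (N : nat) : seq (nat * nat * nat) :=
  [seq (ab, c) | ab <- [seq (a, b) | a <- iota 0 N, b <- iota 0 N], c <- iota 0 N].

Definition base_cond (d : nat) (t : nat * nat * nat) : bool :=
  let: (x, y, z) := t in
  [&& 0 < x, 0 < z, x * z == d, y < z & gcdn (gcdn x y) z == 1]%N.

Definition M1 (m : nat) : {fset 'M[algC]_2} :=
  [fset utmx t.1.1 t.1.2 t.2 | t in
     [seq t <- triples m.+1 | base_cond m t && odd t.1.1]].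

Definition S1 (m : nat) : {fset 'M[algC]_2} :=
  [fset utmx t.1.1 t.1.2 t.2 | t in
     [seq t <- triples m.+1 | base_cond m t && odd t.2]].

Definition S2 (m : nat) : {fset 'M[algC]_2} :=
  [fset (sqrtC 2)^-1 *: utmx t.1.1 t.1.2 t.2 | t in
     [seq t <- triples (2 * m).+1 |
        base_cond (2 * m) t && ~~ odd t.1.1 && ~~ odd t.2]].

Definition M2 (m : nat) : {fset 'M[algC]_2} := S1 m `|` S2 m.

(* Both sides are counted on their defining triples (x, y, z).  For x odd write
   z = 2^a c with c odd.  If 2^a divides y, then (2^a x, y/2^a, c) lies in S_1^m;
   otherwise 2^j exactly divides y for some j < a, and (2^(j+1) x, y/2^j, z/2^j)
   lies in S_2^m.  The inverse removes the 2-part 2^b of the first entry and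
   multiplies y and z by 2^b, or by 2^(b-1) when z is even.  Moving a power of 2
   from (y, z) to x or back does not change gcd(x, y, z) as long as x and one of
   y, z are odd.  Finally S_1^m and S_2^m are disjoint, since their top-left
   entries differ by the irrational factor sqrt 2. *)

From HB Require Import structures.
From mathcomp Require Import all_boot all_order all_algebra all_field.
From mathcomp Require Import finmap.
From mathcomp Require Import zify.
Import GRing.Theory Num.Theory.

Definition triple := (nat * nat * nat)%type.

Lemma pow2_odd_decomp n : 0 < n -> exists k c, odd c /\ n = 2 ^ k * c.
Proof.
move=> n_gt0; have [c co_2c ->] := pfactor_coprime (isT : prime 2) n_gt0.
by exists (logn 2 n), c; rewrite -coprime2n mulnC.
Qed.

Lemma pow2S_odd_decomp n : 0 < n -> ~~ odd n -> exists k c, odd c /\ n = 2 ^ k.+1 * c.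
Proof.
move=> /(pow2_odd_decomp n) [[|k] [c [odd_c ->]]]; first by rewrite mul1n odd_c.
by exists k, c.
Qed.

Lemma logn2_pow2_odd k c : odd c -> logn 2 (2 ^ k * c) = k.
Proof.
move=> odd_c; have c_gt0 : 0 < c by case: c odd_c.
by rewrite lognM ?expn_gt0 // pfactorK // logn_coprime ?addn0 ?coprime2n.
Qed.

Lemma coprime_pow2_odd k n : odd n -> coprime (2 ^ k) n.
Proof. by move=> odd_n; rewrite coprimeXl ?coprime2n. Qed.

Lemma coprime_pow2_gcdn k y z : odd y || odd z -> coprime (2 ^ k) (gcdn y z).
Proof.
move=> odd_yz; apply: coprime_pow2_odd.
by case/orP: odd_yz; apply: dvdn_odd; [apply: dvdn_gcdl | apply: dvdn_gcdr].
Qed.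

Lemma gcdn3_mull k x y z :
  coprime k (gcdn y z) -> gcdn (gcdn (k * x) y) z = gcdn (gcdn x y) z.
Proof.
by move=> co_k; rewrite -!gcdnA gcdnC mulnC Gauss_gcdl 1?coprime_sym // gcdnC.
Qed.

Lemma gcdn3_mulr k x y z :
  coprime k x -> gcdn (gcdn x (k * y)) (k * z) = gcdn (gcdn x y) z.
Proof. by move=> co_k; rewrite -!gcdnA -muln_gcdr mulnC Gauss_gcdl // coprime_sym. Qed.

Arguments base_cond : simpl never.

Lemma base_cond_shift k d x y z : 0 < k -> coprime k x -> coprime k (gcdn y z) ->
  base_cond d (x, k * y, k * z) = base_cond d (k * x, y, z).
Proof.
move=> k_gt0 co_kx co_kyz; rewrite /base_cond gcdn3_mull // gcdn3_mulr //.
by rewrite ltn_pmul2l // !muln_gt0 k_gt0 mulnCA mulnA.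
Qed.

Lemma base_cond_mull k d x y z : 0 < k -> coprime k (gcdn y z) ->
  base_cond (k * d) (k * x, y, z) = base_cond d (x, y, z).
Proof.
move=> k_gt0 co_kyz; rewrite /base_cond gcdn3_mull //.
by rewrite muln_gt0 k_gt0 -mulnA eqn_pmul2l.
Qed.

Lemma base_cond_odd_middle d x y z :
  base_cond d (x, y, z) -> ~~ odd x -> ~~ odd z -> odd y.
Proof.
case/and5P=> _ _ _ _ /eqP gcd1 even_x even_z; apply: contraT => even_y.
have : 2 %| gcdn (gcdn x y) z by rewrite !dvdn_gcd !dvdn2 even_x even_y even_z.
by rewrite gcd1.
Qed.

Definition m1_to_m2 (t : triple) : triple :=
  let: (x, y, z) := t in
  let a := logn 2 z in
  if 2 ^ a %| y then (2 ^ a * x, y %/ 2 ^ a, z %/ 2 ^ a)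
  else let j := logn 2 y in (2 ^ j.+1 * x, y %/ 2 ^ j, z %/ 2 ^ j).

Definition m2_to_m1 (t : triple) : triple :=
  let: (x, y, z) := t in
  let b := logn 2 x in
  let k := if odd z then b else b.-1 in
  (x %/ 2 ^ b, 2 ^ k * y, 2 ^ k * z).

Lemma m1_to_m2_dvd a x y z : odd z ->
  m1_to_m2 (x, 2 ^ a * y, 2 ^ a * z) = (2 ^ a * x, y, z).
Proof. by move=> odd_z; rewrite /= logn2_pow2_odd // dvdn_mulr // !mulKn ?expn_gt0. Qed.

Lemma m1_to_m2_ndvd j r x y z : odd y -> odd z ->
  m1_to_m2 (x, 2 ^ j * y, 2 ^ j * (2 ^ r.+1 * z)) = (2 ^ j.+1 * x, y, 2 ^ r.+1 * z).
Proof.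
move=> odd_y odd_z; rewrite /= mulnA -expnD !logn2_pow2_odd // expnD.
have y_gt0 : 0 < y by case: y odd_y.
rewrite dvdn_pmul2l ?expn_gt0 // pfactor_dvdn // logn_coprime ?coprime2n //=.
by rewrite -mulnA !mulKn ?expn_gt0.
Qed.

Lemma m2_to_m1_odd b x y z : odd x -> odd z ->
  m2_to_m1 (2 ^ b * x, y, z) = (x, 2 ^ b * y, 2 ^ b * z).
Proof. by move=> odd_x odd_z; rewrite /= logn2_pow2_odd // odd_z mulKn ?expn_gt0. Qed.

Lemma m2_to_m1_even k x y z : odd x -> ~~ odd z ->
  m2_to_m1 (2 ^ k.+1 * x, y, z) = (x, 2 ^ k * y, 2 ^ k * z).
Proof.
by move=> odd_x even_z; rewrite /= logn2_pow2_odd // (negbTE even_z) mulKn ?expn_gt0.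
Qed.

(* Written exactly as the filters in [M1], [S1] and [S2], so that these unfold
   to images of [triple_set] by conversion. *)
Definition m1_triple m (t : triple) := base_cond m t && odd t.1.1.
Definition s1_triple m (t : triple) := base_cond m t && odd t.2.
Definition s2_triple m (t : triple) := base_cond (2 * m) t && ~~ odd t.1.1 && ~~ odd t.2.
Definition m2_triple m (t : triple) := s1_triple m t || s2_triple m t.

Lemma m1_to_m2_spec m t :
  m1_triple m t -> m2_triple m (m1_to_m2 t) /\ m2_to_m1 (m1_to_m2 t) = t.
Proof.
case: t => [[x y] z] /andP [base odd_x]; rewrite /= in odd_x.
have /and5P [_ z_gt0 _ _ _] := base.
have [a [c [odd_c z_def]]] := pow2_odd_decomp z z_gt0; rewrite {z z_gt0}z_def in base *.
have [/dvdnP [w y_def] | ndvd_y] := boolP (2 ^ a %| y).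
  rewrite {y}y_def (mulnC w) in base *.
  rewrite m1_to_m2_dvd // m2_to_m1_odd //; split => //.
  by rewrite /m2_triple /s1_triple odd_c andbT -base_cond_shift ?base ?expn_gt0
    ?coprime_pow2_gcdn ?coprime_pow2_odd ?odd_c ?orbT.
have y_gt0 : 0 < y by case: y ndvd_y {base}; rewrite ?dvdn0.
have [j [e [odd_e y_def]]] := pow2_odd_decomp y y_gt0.
rewrite {y y_gt0}y_def in base ndvd_y *.
have [r a_def] : exists r, a = j + r.+1.
  exists (a - j.+1); suff: j < a by lia.
  by rewrite ltnNge; apply: contra ndvd_y => le_aj; rewrite dvdn_mulr ?dvdn_exp2l.
rewrite {a ndvd_y}a_def expnD -mulnA in base *.
have even_z : ~~ odd (2 ^ r.+1 * c) by rewrite oddM oddX.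
rewrite m1_to_m2_ndvd // m2_to_m1_even //; split => //.
apply/orP; right; rewrite /s2_triple /= oddM oddX /= even_z !andbT.
rewrite expnS -mulnA base_cond_mull ?(coprime_pow2_gcdn 1) ?odd_e //.
by rewrite -base_cond_shift ?expn_gt0 ?coprime_pow2_gcdn ?coprime_pow2_odd ?odd_e.
Qed.

Lemma m2_to_m1_spec m t :
  m2_triple m t -> m1_triple m (m2_to_m1 t) /\ m1_to_m2 (m2_to_m1 t) = t.
Proof.
case: t => [[x y] z] /orP [/andP [base odd_z] | /andP [/andP [base even_x] even_z]];
  have /and5P [x_gt0 z_gt0 _ _ _] := base.
- rewrite /= in odd_z; have [b [c [odd_c x_def]]] := pow2_odd_decomp x x_gt0.
  rewrite {x x_gt0}x_def in base *.
  rewrite m2_to_m1_odd // m1_to_m2_dvd //; split => //.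
  by rewrite /m1_triple /= odd_c andbT base_cond_shift ?expn_gt0
    ?coprime_pow2_gcdn ?coprime_pow2_odd ?odd_z ?orbT.
- rewrite /= in even_x even_z.
  have odd_y : odd y by apply: base_cond_odd_middle base even_x even_z.
  have [k [c [odd_c x_def]]] := pow2S_odd_decomp x x_gt0 even_x.
  have [r [d [odd_d z_def]]] := pow2S_odd_decomp z z_gt0 even_z.
  rewrite {x x_gt0 even_x}x_def {z z_gt0 even_z}z_def in base *.
  have even_z : ~~ odd (2 ^ r.+1 * d) by rewrite oddM oddX.
  rewrite m2_to_m1_even // m1_to_m2_ndvd //; split => //.
  rewrite /m1_triple /= odd_c andbT base_cond_shift ?expn_gt0
    ?coprime_pow2_gcdn ?coprime_pow2_odd ?odd_y //.
  by rewrite -(@base_cond_mull 2) ?(coprime_pow2_gcdn 1) ?odd_y // mulnA -expnS.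
Qed.

Lemma mem_triples N x y z : x < N -> y < N -> z < N -> (x, y, z) \in triples N.
Proof. by move=> x_lt y_lt z_lt; rewrite !allpairs_f ?mem_iota. Qed.

Lemma base_cond_triples d t : base_cond d t -> t \in triples d.+1.
Proof.
case: t => [[x y] z] /and5P [x_gt0 z_gt0 /eqP xz_eq y_lt_z _].
by apply: mem_triples; nia.
Qed.

Local Open Scope fset_scope.

Lemma cardfsU_disjoint (K : choiceType) (A B : {fset K}) :
  [disjoint A & B] -> #|` A `|` B| = (#|` A| + #|` B|)%N.
Proof. by move=> /eqP disjAB; rewrite cardfsU disjAB cardfs0 subn0. Qed.

Lemma card_fset_bij {K K' : choiceType} {A : {fset K}} {B : {fset K'}}
    (f : K -> K') (g : K' -> K) :
  {homo f : x / x \in A >-> x \in B} -> {homo g : y / y \in B >-> y \in A} ->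
  {in A, cancel f g} -> {in B, cancel g f} -> #|` A| = #|` B|.
Proof.
move=> fAB gBA fK gK; apply/eqP; rewrite eqn_leq; apply/andP; split.
- have /card_in_imfsetP/eqP <- : {in A &, injective f} := can_in_inj fK.
  by apply: fsubset_leq_card; apply/fsubsetP => _ /imfsetP [x /= /fAB + ->].
- have /card_in_imfsetP/eqP <- : {in B &, injective g} := can_in_inj gK.
  by apply: fsubset_leq_card; apply/fsubsetP => _ /imfsetP [y /= /gBA + ->].
Qed.

Lemma card_imfset_seq {T K : choiceType} {f : T -> K} (s : seq T) :
  injective f -> #|` [fset f x | x in s]| = #|` [fset x | x in s]|.
Proof. by move=> f_inj; rewrite !card_imfset. Qed.

Definition triple_set N (P : pred triple) : {fset triple} :=
  [fset t | t in [seq t <- triples N | P t]].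

Lemma mem_triple_set N (P : pred triple) t :
  {subset P <= triples N} -> (t \in triple_set N P) = P t.
Proof.
by move=> P_sub; rewrite inE mem_filter; case Pt: (P t) => //=; apply: P_sub.
Qed.

Lemma utmx_inj : injective (fun t : triple => utmx t.1.1 t.1.2 t.2).
Proof.
move=> [[x y] z] [[x' y'] z'] /= eq_mx.
have entry i j : utmx x y z i j = utmx x' y' z' i j by rewrite eq_mx.
move: (entry ord0 ord0) (entry ord0 ord_max) (entry ord_max ord_max).
by rewrite !mxE /= => /eqP + /eqP + /eqP; rewrite !eqr_nat => /eqP -> /eqP -> /eqP ->.
Qed.

Lemma sqrn_neq_double_sqrn x X : 0 < X -> X ^ 2 != 2 * x ^ 2.
Proof.
move=> X_gt0; have [->|x_gt0] := posnP x.
  by rewrite exp0n // muln0 -lt0n expn_gt0 X_gt0.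
apply/eqP => /(congr1 (logn 2)).
rewrite lognM ?expn_gt0 ?x_gt0 // !lognX (pfactorK 1) //; lia.
Qed.

Lemma natr_neq_sqrt2_scaled x X : 0 < X -> (x%:R != (sqrtC 2)^-1 * X%:R :> algC)%R.
Proof.
move=> X_gt0; apply/eqP => x_eq.
have : ((X ^ 2)%:R = (2 * x ^ 2)%:R :> algC)%R.
  by rewrite natrM !natrX x_eq exprMn exprVn sqrtCK mulrA divff ?mul1r ?pnatr_eq0.
by move/eqP; rewrite eqr_nat (negPf (sqrn_neq_double_sqrn x X X_gt0)).
Qed.

Lemma S1_S2_disjoint m : [disjoint S1 m & S2 m].
Proof.
apply/fdisjointP => _ /imfsetP [[[x y] z] _ ->].
apply/negP => /imfsetP [[[X Y] Z]].
rewrite mem_filter => /andP [/andP [/andP [base _] _] _].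
move=> /(congr1 (fun M : 'M[algC]_2 => M ord0 ord0)); rewrite !mxE /= => /eqP.
by have /and5P [X_gt0 _ _ _ _] := base; rewrite (negPf (natr_neq_sqrt2_scaled x X X_gt0)).
Qed.

Definition M1_triples m := triple_set m.+1 (m1_triple m).
Definition M2_triples m :=
  triple_set m.+1 (s1_triple m) `|` triple_set (2 * m).+1 (s2_triple m).

Lemma mem_M1_triples m t : (t \in M1_triples m) = m1_triple m t.
Proof. by rewrite mem_triple_set // => u /andP [/base_cond_triples]. Qed.

Lemma mem_S1_triples m t : (t \in triple_set m.+1 (s1_triple m)) = s1_triple m t.
Proof. by rewrite mem_triple_set // => u /andP [/base_cond_triples]. Qed.

Lemma mem_S2_triples m t : (t \in triple_set (2 * m).+1 (s2_triple m)) = s2_triple m t.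
Proof. by rewrite mem_triple_set // => u /andP [/andP [/base_cond_triples]]. Qed.

Lemma mem_M2_triples m t : (t \in M2_triples m) = m2_triple m t.
Proof. by rewrite in_fsetU mem_S1_triples mem_S2_triples. Qed.

Lemma S1_S2_triples_disjoint m :
  [disjoint triple_set m.+1 (s1_triple m) & triple_set (2 * m).+1 (s2_triple m)].
Proof.
apply/fdisjointP => [[[x y] z]]; rewrite mem_S1_triples mem_S2_triples.
case/andP => /and5P [x_gt0 z_gt0 /eqP xz_m _ _] _.
by apply/negP => /andP [/andP [/and5P [_ _ /eqP xz_2m _ _] _] _]; nia.
Qed.

Lemma card_M1 m : #|` M1 m| = #|` M1_triples m|.
Proof. exact: card_imfset_seq utmx_inj. Qed.

Lemma card_M2 m : #|` M2 m| = #|` M2_triples m|.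
Proof.
have scale_inj : injective (fun t : triple => ((sqrtC 2)^-1 *: utmx t.1.1 t.1.2 t.2)%R).
  by apply: inj_comp utmx_inj; apply/scalerI; rewrite invr_eq0 sqrtC_eq0 pnatr_eq0.
rewrite !cardfsU_disjoint ?S1_S2_disjoint ?S1_S2_triples_disjoint //.
by rewrite (card_imfset_seq _ utmx_inj) (card_imfset_seq _ scale_inj).
Qed.

Theorem lemma2p6 (m : nat) (hm : (0 < m)%N) (heven : ~~ odd m) :
  #|` M1 m| = #|` M2 m|.
Proof.
rewrite card_M1 card_M2; apply: (card_fset_bij m1_to_m2 m2_to_m1) => t.
- by rewrite mem_M1_triples mem_M2_triples => /m1_to_m2_spec [].
- by rewrite mem_M1_triples mem_M2_triples => /m2_to_m1_spec [].
- by rewrite mem_M1_triples => /m1_to_m2_spec [].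
- by rewrite mem_M2_triples => /m2_to_m1_spec [].
Qed.
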